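(* Let $G\subseteq \mathrm{GL}_n(\mathbb{C})$ be a closed subgroup with left Haar measure $\mu$, let $\Gamma\subset G$ be a discrete subgroup, and let $\mathcal{F}_\Gamma\subset G$ be a measurable fundamental domain for $\Gamma$ (the translates $u\mathcal{F}_\Gamma$, $u\in\Gamma$, are pairwise disjoint) with $0<\mu(\mathcal{F}_\Gamma)<\infty$ and $R_\Gamma:=\sup_{g\in\mathcal{F}_\Gamma}\|g\|<\infty$. For $x\in G$ and $M>0$ let $B_x(M)=\{g\in G:\|xg\|\le M\}$. Then for all $x\in G$, $a\in M_{m,n}(\mathbb{C})$, $c>0$ and $M>0$, $$\sum_{u\in\Gamma\cap B_x(M)}e^{-c\|au\|^2}\le\frac{1}{\mu(\mathcal{F}_\Gamma)}\int_{B_x(R_\Gamma M)}e^{-\frac{c}{R_\Gamma^2}\|ag\|^2}\,d\mu(g).$$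
   Context: $\|\cdot\|$ denotes the Frobenius norm of a (possibly rectangular) complex matrix. *)

From HB Require Import structures.
From mathcomp Require Import all_boot all_order all_algebra.
From mathcomp Require Import all_classical all_reals all_analysis.
From mathcomp.real_closed Require Import complex.
Set Implicit Arguments. Unset Strict Implicit. Unset Printing Implicit Defensive.
Import Order.TTheory GRing.Theory Num.Theory.
Local Open Scope classical_set_scope.
Local Open Scope ring_scope.

Section Defs.
Variable R : realType.

Definition csq (z : R[i]) : R := complex.Re z ^+ 2 + complex.Im z ^+ 2.

Definition frob (p q : nat) (A : 'M[R[i]]_(p, q)) : R :=
  Num.sqrt (\sum_(i < p) \sum_(j < q) csq (A i j)).

Definition Cmx (n : nat) := 'M[R[i]]_n.
HB.instance Definition _ n := Choice.on (Cmx n).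
HB.instance Definition _ n := isPointed.Build (Cmx n) 0.

Definition frob_open (n : nat) : set (set (Cmx n)) :=
  [set A | forall x, A x -> exists2 e : R, 0 < e &
             forall y : Cmx n, frob (y - x) < e -> A y].

Definition MxB (n : nat) := g_sigma_algebraType (@frob_open n).

Definition frob_closed (n : nat) (K : set (Cmx n)) : Prop :=
  forall y : Cmx n, (forall e : R, 0 < e -> exists x, K x /\ frob (y - x) < e) -> K y.

(* compact subsets of M_n(C) (= closed and bounded, Heine-Borel) *)
Definition frob_compact (n : nat) (K : set (Cmx n)) : Prop :=
  frob_closed K /\ exists M : R, forall x, K x -> frob x <= M.

Definition rel_open (n : nat) (G U : set (Cmx n)) : Prop :=
  exists2 V, frob_open V & U = G `&` V.

Definition closed_subgroup_GL (n : nat) (G : set (Cmx n)) : Prop :=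
  [/\ (forall g, G g -> g \in unitmx),
      G 1%:M,
      (forall g h, G g -> G h -> G (g *m h)),
      (forall g, G g -> G (invmx g)) &
      (forall g : Cmx n, g \in unitmx ->
         (forall e : R, 0 < e -> exists h, G h /\ frob (g - h) < e) -> G g)].

Definition discrete_subgroup (n : nat) (G Gam : set (Cmx n)) : Prop :=
  [/\ Gam `<=` G, Gam 1%:M,
      (forall g h, Gam g -> Gam h -> Gam (g *m h)),
      (forall g, Gam g -> Gam (invmx g)) &
      (forall u, Gam u -> exists2 e : R, 0 < e &
          forall v, Gam v -> frob (v - u) < e -> v = u)].

Definition ltrans (n : nat) (x : Cmx n) (A : set (Cmx n)) : set (Cmx n) :=
  [set x *m g | g in A].

(* mu is a left Haar measure of G (a Radon measure on M_n(C) supported on G,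
   nonzero and left G-invariant) *)
Definition left_haar_measure (n : nat) (G : set (MxB n))
    (mu : {measure set (MxB n) -> \bar R}) : Prop :=
  [/\ (forall A, measurable A -> mu A = mu (A `&` G)),
      (0 < mu G)%E,
      (forall x A, G x -> measurable A -> A `<=` G -> mu (ltrans x A) = mu A),
      (forall K, K `<=` G -> frob_compact K -> (mu K < +oo)%E) &
      ((forall A, measurable A -> A `<=` G ->
          mu A = ereal_inf [set mu U | U in [set U | rel_open G U /\ A `<=` U]]) /\
      (forall U, rel_open G U ->
          mu U = ereal_sup [set mu K | K in [set K | frob_compact K /\ K `<=` U]]))].

Definition fundamental_domain (n : nat) (G Gam : set (MxB n)) (F : set (MxB n)) : Prop :=
  [/\ measurable F, F `<=` G &
      (forall u v, Gam u -> Gam v -> u <> v -> ltrans u F `&` ltrans v F = set0)].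

Definition Bx (n : nat) (G : set (MxB n)) (x : Cmx n) (M : R) : set (MxB n) :=
  [set g | G g /\ frob (x *m g) <= M].

End Defs.

From HB Require Import structures.
From mathcomp Require Import all_boot all_order all_algebra.
From mathcomp Require Import all_classical all_reals all_analysis.
From mathcomp.real_closed Require Import complex.
From mathcomp Require Import ring measurable_realfun.
Set Implicit Arguments. Unset Strict Implicit. Unset Printing Implicit Defensive.
Import Order.TTheory GRing.Theory Num.Theory.
Local Open Scope classical_set_scope.
Local Open Scope ring_scope.

(* For u in Gam with ||x u|| <= M and f in F we have ||x u f|| <= R_Gam M and
   ||a u f|| <= R_Gam ||a u||, so the weight exp(-c ||a u||^2) is dominated
   by the integrand on the whole translate u F. These translates are pairwise
   disjoint, lie in B_x(R_Gam M) and all have measure mu(F) by left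
   invariance; integrating over their union bounds every finite partial sum
   of the left-hand side by the integral divided by mu(F). *)

Section Frobenius.
Variable R : realType.

Lemma csq_ge0 (z : R[i]) : 0 <= csq z.
Proof. by rewrite /csq addr_ge0 // sqr_ge0. Qed.

Lemma frob_ge0 p q (A : 'M[R[i]]_(p, q)) : 0 <= frob A.
Proof. exact: sqrtr_ge0. Qed.

(* The real form of the Cauchy-Schwarz inequality |sum_k x_k y_k|^2 <=
   (sum_k |x_k|^2)(sum_k |y_k|^2), with x_k = p_k + i q_k and y_k = r_k + i s_k. *)
Lemma sqr_sum_cmul_le (I : finType) (p q r s : I -> R) :
  (\sum_k (p k * r k - q k * s k)) ^+ 2 + (\sum_k (p k * s k + q k * r k)) ^+ 2
  <= (\sum_k (p k ^+ 2 + q k ^+ 2)) * (\sum_k (r k ^+ 2 + s k ^+ 2)).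
Proof.
(* Lagrange's identity: the defect is a sum of squares over pairs (k, l). *)
pose Y k l := (p k ^+ 2 + q k ^+ 2) * (r l ^+ 2 + s l ^+ 2) -
  ((p k * r k - q k * s k) * (p l * r l - q l * s l) +
   (p k * s k + q k * r k) * (p l * s l + q l * r l)).
have defect : (\sum_k (p k ^+ 2 + q k ^+ 2)) * (\sum_k (r k ^+ 2 + s k ^+ 2)) -
  ((\sum_k (p k * r k - q k * s k)) ^+ 2 + (\sum_k (p k * s k + q k * r k)) ^+ 2)
  = \sum_k \sum_l Y k l.
  rewrite /Y !expr2 !big_distrlr /= -!big_split -sumrB /=; apply: eq_bigr => k _.
  by rewrite -!big_split -sumrB /=; apply: eq_bigr => l _; ring.
have symmetrize : 2 * (\sum_k \sum_l Y k l) = \sum_k \sum_l (Y k l + Y l k).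
  rewrite mulr2n mulrDl mul1r; under [RHS]eq_bigr do rewrite big_split /=.
  by rewrite big_split /= [X in _ + X = _]exchange_big.
rewrite -subr_ge0 defect -(pmulr_rge0 _ (ltr0Sn _ 1)) symmetrize.
apply: sumr_ge0 => k _; apply: sumr_ge0 => l _.
have -> : Y k l + Y l k =
   (p k * r l + q k * s l - p l * r k - q l * s k) ^+ 2 +
   (q k * r l - p k * s l - q l * r k + p l * s k) ^+ 2 by rewrite /Y; ring.
by rewrite addr_ge0 // sqr_ge0.
Qed.

Lemma csq_sum_mul_le (I : finType) (x y : I -> R[i]) :
  csq (\sum_k x k * y k) <= (\sum_k csq (x k)) * (\sum_k csq (y k)).
Proof.
rewrite /csq (raddf_sum (@complex.Re R : Rcomplex R -> R)).
rewrite (raddf_sum (@complex.Im R : Rcomplex R -> R)) /=.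
have ReM k : complex.Re (x k * y k) = complex.Re (x k) * complex.Re (y k) -
    complex.Im (x k) * complex.Im (y k) by case: (x k) => ? ?; case: (y k).
have ImM k : complex.Im (x k * y k) = complex.Re (x k) * complex.Im (y k) +
    complex.Im (x k) * complex.Re (y k) by case: (x k) => ? ?; case: (y k).
under eq_bigr do rewrite ReM; under [X in _ + X ^+ 2]eq_bigr do rewrite ImM.
exact: sqr_sum_cmul_le.
Qed.

Lemma frobM p q r (A : 'M[R[i]]_(p, q)) (B : 'M[R[i]]_(q, r)) :
  frob (A *m B) <= frob A * frob B.
Proof.
have sum_csq_ge0 p' q' (C : 'M[R[i]]_(p', q')) : 0 <= \sum_i \sum_j csq (C i j).
  by apply: sumr_ge0 => i _; apply: sumr_ge0 => j _; exact: csq_ge0.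
rewrite /frob -sqrtrM // ler_sqrt; last exact: mulr_ge0.
rewrite [X in _ * X]exchange_big big_distrlr /=; apply: ler_sum => i _.
apply: ler_sum => j _; rewrite mxE.
exact: csq_sum_mul_le.
Qed.

Lemma gauss_weight_mulmx_le p q (a : 'M[R[i]]_(p, q)) (u f : 'M[R[i]]_q) (c r : R) :
  0 < c -> frob f <= r ->
  expR (- c * frob (a *m u) ^+ 2) <= expR (- (c / r ^+ 2) * frob (a *m (u *m f)) ^+ 2).
Proof.
move=> c0 fr; rewrite ler_expR !mulNr lerN2.
have au_ge0 := frob_ge0 (a *m u).
have r0 : 0 <= r := le_trans (frob_ge0 f) fr.
have [->|r_neq0] := eqVneq r 0.
  by rewrite expr0n /= invr0 mulr0 mul0r mulr_ge0 ?sqr_ge0 ?ltW.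
have le_auf : frob (a *m (u *m f)) ^+ 2 <= frob (a *m u) ^+ 2 * r ^+ 2.
  rewrite -exprMn lerXn2r ?nnegrE ?frob_ge0 ?mulr_ge0 // mulmxA.
  exact: le_trans (frobM _ _) (ler_wpM2l au_ge0 fr).
apply: le_trans (ler_wpM2l (divr_ge0 (ltW c0) (sqr_ge0 r)) le_auf) _.
by rewrite mulrCA divfK ?sqrf_eq0 // mulrC.
Qed.

Lemma Bx_mulmx n (G : set (MxB R n)) (x u f : Cmx R n) (M r : R) :
  (forall g h, G g -> G h -> G (g *m h)) ->
  Bx G x M u -> G f -> frob f <= r -> Bx G x (r * M) (u *m f).
Proof.
move=> GM [Gu xuM] Gf fr; split; first exact: GM.
rewrite mulmxA mulrC; apply: le_trans (frobM _ _) _.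
by apply: ler_pM; rewrite ?frob_ge0.
Qed.

End Frobenius.

Section LeftTranslation.
Variables (R : realType) (n : nat).

Lemma measurable_mulmx (v : Cmx R n) :
  measurable_fun setT (fun g : MxB R n => (v *m g : MxB R n)).
Proof.
apply: (@measurability _ _ (MxB R n) (MxB R n) setT _ (@frob_open R n)) => //.
move=> _ [V oV <-]; apply: sub_sigma_algebra; rewrite setTI => g /= Vvg.
have [e e0 ballV] := oV _ Vvg.
have v1_gt0 : 0 < frob v + 1 by rewrite ltr_wpDl // frob_ge0.
exists (e / (frob v + 1)); first by rewrite divr_gt0.
move=> h; rewrite ltr_pdivlMr // => hg; apply: ballV; rewrite -mulmxBr.
apply: le_lt_trans (frobM _ _) (le_lt_trans _ hg); rewrite mulrC.
by apply: ler_wpM2l; [exact: frob_ge0 | rewrite lerDl].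
Qed.

Lemma measurable_preimage_mulmx (v : Cmx R n) (A : set (MxB R n)) :
  measurable A -> measurable ((fun g : MxB R n => (v *m g : MxB R n)) @^-1` A).
Proof. by move=> mA; rewrite -[X in measurable X]setTI; exact: measurable_mulmx. Qed.

Lemma ltrans_preimage (u : MxB R n) (A : set (MxB R n)) : u \in unitmx ->
  ltrans u A = (fun g : MxB R n => (invmx u *m g : MxB R n)) @^-1` A.
Proof.
move=> uU; apply/seteqP; split => g /=.
- by case => f Af <-; rewrite mulKmx.
- by move=> Ag; exists (invmx u *m g) => //; rewrite mulKVmx.
Qed.

End LeftTranslation.

Section DisjointPacking.
Local Open Scope ereal_scope.
Context d (T : measurableType d) (R : realType) (mu : {measure set T -> \bar R}).

(* Unlike [ge0_le_integral] this needs no measurability, which is unknown for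
   the integrand of the theorem restricted to [Bx]. *)
Lemma ge0_le_integralT (h f : T -> \bar R) :
  (forall t, 0 <= h t) -> (forall t, h t <= f t) ->
  \int[mu]_t h t <= \int[mu]_t f t.
Proof.
move=> h0 hf; have f0 t : 0 <= f t := le_trans (h0 t) (hf t).
rewrite !ge0_integralTE //; apply: ereal_sup_le => _ [g /= gh <-].
by exists g => //= t; exact: le_trans (gh t) (hf t).
Qed.

Lemma fsum_le_integral_disjoint (I : choiceType) (S : set I) (w : I -> R)
    (P : I -> set T) (D : set T) (phi : T -> R) :
  finite_set S ->
  (forall i, measurable (P i)) ->
  (forall i j, S i -> S j -> i <> j -> P i `&` P j = set0) ->
  (forall i, (0 <= w i)%R) ->
  (forall t, D t -> (0 <= phi t)%R) ->
  (forall i t, S i -> P i t -> D t /\ (w i <= phi t)%R) ->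
  \sum_(i \in S) (w i)%:E * mu (P i) <= \int[mu]_(t in D) (phi t)%:E.
Proof.
move=> finS mP disjP w0 phi0 dom.
pose h t := \sum_(i \in S) (w i)%:E * (\1_(P i) t)%:E.
have hE : \int[mu]_t h t = \sum_(i \in S) (w i)%:E * mu (P i).
  rewrite ge0_integral_fsum //; last 2 first.
  - by move=> i; apply: measurable_funeM; apply/measurable_EFinP.
  - by move=> i t _; rewrite mule_ge0 // lee_fin.
  apply: eq_fsbigr => i _.
  by rewrite ge0_integralZl_EFin // ?integral_indic ?setIT //; apply/measurable_EFinP.
rewrite -hE [X in _ <= X]integral_mkcond; apply: ge0_le_integralT => t.
  by apply: fsume_ge0 => i _; rewrite mule_ge0 // lee_fin.
case: (pselect (exists2 i, S i & P i t)) => [[i Si Pit]|noP].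
- have other j : (S `\ i) j -> (w j)%:E * (\1_(P j) t)%:E = 0.
    move=> [Sj /= ji]; rewrite indicE memNset ?mule0 // => Pjt.
    by have : (P j `&` P i) t by []; rewrite disjP.
  rewrite /h (fsbigD1 i) // fsbig1 //= adde0 indicE mem_set // mule1.
  by have [Dt le_w] := dom i t Si Pit; rewrite /patch mem_set // lee_fin.
- rewrite /h fsbig1 => [|i Si]; last first.
    by rewrite indicE memNset ?mule0 // => Pit; apply: noP; exists i.
  by rewrite /patch; case: ifP => [/set_mem Dt|_]; rewrite ?lee_fin ?phi0.
Qed.

End DisjointPacking.
Unset Implicit Arguments.

Theorem mainTheorem7 (R : realType) (n m : nat)
  (G : set (MxB R n)) (mu : {measure set (MxB R n) -> \bar R})
  (Gam F : set (MxB R n)) :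
  closed_subgroup_GL G ->
  left_haar_measure G mu ->
  discrete_subgroup G Gam ->
  fundamental_domain G Gam F ->
  (0 < mu F)%E -> (mu F < +oo)%E ->
  (exists B : R, forall g, F g -> frob g <= B) ->
  let RG := sup [set frob g | g in F] in
  forall (x : MxB R n) (a : 'M[R[i]]_(m, n)) (c M : R),
    G x -> 0 < c -> 0 < M ->
    (\esum_(u in Gam `&` Bx G x M) (expR (- c * frob (a *m u) ^+ 2))%:E
     <= ((fine (mu F))^-1)%:E *
        \int[mu]_(g in Bx G x (RG * M))
           (expR (- (c / RG ^+ 2) * frob (a *m g) ^+ 2))%:E)%E.
Proof.
move=> [Gunit _ GM _ _] [_ _ mu_ltrans _ _] [GamG _ _ _ _] [mF FG Fdisj] mF0 mFoo.
move=> [B Bub] RG x a c M _ c0 _.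
have FRG f : F f -> frob f <= RG.
  by move=> Ff; apply: ub_le_sup; [exists B => _ [g Fg <-]; exact: Bub | exists f].
set r := fine (mu F).
have muFE : mu F = r%:E by rewrite fineK // ge0_fin_numE // ltW.
have r0 : 0 < r by rewrite -lte_fin -muFE.
pose P (u : MxB R n) := (fun g : MxB R n => (invmx u *m g : MxB R n)) @^-1` F.
have PE u : Gam u -> P u = ltrans u F by move=> /GamG /Gunit uU; rewrite ltrans_preimage.
rewrite /esum; apply: ge_ereal_sup => _ [S [finS SGB] <-].
have packing : (\sum_(u \in S) (expR (- c * frob (a *m u) ^+ 2))%:E * mu (P u) <=
    \int[mu]_(g in Bx G x (RG * M)) (expR (- (c / RG ^+ 2) * frob (a *m g) ^+ 2))%:E)%E.
  apply: fsum_le_integral_disjoint => //.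
  - by move=> u; exact: measurable_preimage_mulmx.
  - by move=> u v /SGB[Gu _] /SGB[Gv _] uv; rewrite !PE // Fdisj.
  move=> u g /SGB[Gu Bu]; rewrite PE // => -[f Ff <-].
  split; first by apply: Bx_mulmx => //; [exact: FG | exact: FRG].
  exact: gauss_weight_mulmx_le (FRG _ Ff).
have translates_measure : (\sum_(u \in S) (expR (- c * frob (a *m u) ^+ 2))%:E * mu (P u) =
    \sum_(u \in S) (expR (- c * frob (a *m u) ^+ 2))%:E * r%:E)%E.
  apply: eq_fsbigr => u /[1!inE] /SGB[Gu _].
  rewrite PE // mu_ltrans //; last exact: GamG.
  by congr (_ * _)%E; exact: muFE.
rewrite translates_measure -ge0_mule_fsuml in packing => [|u]; last first.
  by rewrite lee_fin expR_ge0.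
by rewrite lee_pdivlMl // muleC; exact: packing.
Qed.
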